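(* Let $\mathcal{X}$ be a finite set, $\pi$ a probability distribution on $\mathcal{X}$ with $\pi(x)>0$ for all $x$, and $\mathcal{N}\colon\mathcal{X}\to 2^{\mathcal{X}}$ a symmetric neighborhood mapping (with $x\notin\mathcal{N}(x)$, and $y\in\mathcal{N}(x)\iff x\in\mathcal{N}(y)$) such that every stochastic matrix $K$ on $\mathcal{X}$ with $K(x,y)>0$ if and only if $y\in\mathcal{N}(x)$ is irreducible. For a function $h\colon(0,\infty)\to(0,\infty)$ define $$K_h(x,y)=\frac{\mathbf{1}_{\mathcal{N}(x)}(y)}{Z_h(x)}\,h\!\left(\frac{\pi(y)}{\pi(x)}\right),\qquad Z_h(x)=\sum_{y\in\mathcal{N}(x)}h\!\left(\frac{\pi(y)}{\pi(x)}\right),$$ and let $\pi_h$ be the stationary distribution of $K_h$. If $h(u)=u^a$ for some $a\ge 0$, then $\pi_h(x)\propto\pi(x)^{2a}Z_h(x)$. If $h$ is a balancing function, i.e. $h(u)=u\,h(1/u)$ for all $u>0$, then $\pi_h(x)\propto\pi(x)Z_h(x)$. Moreover, in both cases $K_h$ is reversible (with respect to $\pi_h$).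
   Context: $\mathbf{1}_{A}$ denotes the indicator function of a set $A$; $\propto$ means equality up to a positive normalizing constant independent of $x$. *)

From HB Require Import structures.
From mathcomp Require Import all_boot all_order all_algebra.
From mathcomp Require Import all_classical all_reals all_analysis.
Set Implicit Arguments. Unset Strict Implicit. Unset Printing Implicit Defensive.
Import Order.TTheory GRing.Theory Num.Theory.
Local Open Scope ring_scope.

Section Defs.
Variables (R : realType) (T : finType).

Definition is_distribution (p : T -> R) : Prop :=
  (forall x, 0 <= p x) /\ \sum_(x : T) p x = 1.

Definition stochastic (K : T -> T -> R) : Prop :=
  (forall x y, 0 <= K x y) /\ (forall x, \sum_(y : T) K x y = 1).

Fixpoint kpow (K : T -> T -> R) (n : nat) : T -> T -> R :=
  match n with
  | 0 => fun x y => if x == y then 1 else 0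
  | n'.+1 => fun x y => \sum_(z : T) kpow K n' x z * K z y
  end.

Definition irreducible (K : T -> T -> R) : Prop :=
  forall x y, exists n, 0 < kpow K n x y.

Definition stationary (K : T -> T -> R) (p : T -> R) : Prop :=
  forall y, \sum_(x : T) p x * K x y = p y.

Definition reversible (K : T -> T -> R) (p : T -> R) : Prop :=
  forall x y, p x * K x y = p y * K y x.

Definition Zh (pi : T -> R) (N : T -> {set T}) (h : R -> R) (x : T) : R :=
  \sum_(y in N x) h (pi y / pi x).

Definition Kh (pi : T -> R) (N : T -> {set T}) (h : R -> R) (x y : T) : R :=
  (if y \in N x then 1 else 0) * h (pi y / pi x) / Zh pi N h x.

Definition balancing (h : R -> R) : Prop :=
  forall u, 0 < u -> h u = u * h (u^-1).

(* "pi_h, the stationary distribution of K, satisfies pi_h(x) ∝ w(x), and K is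
   reversible w.r.t. pi_h": the stationary distributions of K are exactly the
   distributions proportional (with positive constant) to w, and K is
   reversible w.r.t. any stationary distribution. *)
Definition stationary_prop_and_reversible (K : T -> T -> R) (w : T -> R) : Prop :=
  (forall p : T -> R,
      (is_distribution p /\ stationary K p) <->
      (is_distribution p /\ exists2 c : R, 0 < c & forall x, p x = c * w x))
  /\ (forall p : T -> R, is_distribution p -> stationary K p -> reversible K p).

End Defs.

(** The chain [K_h] only moves along edges of the symmetric neighbourhood graph,
    so it is reversible with respect to [v * Z_h] as soon as
    [v x h(pi y / pi x)] is symmetric in neighbours [x], [y]: the normalisations
    [Z_h] cancel in detailed balance.  For [h(u) = u^a] take [v = pi^(2a)], since
    [pi x^(2a) (pi y / pi x)^a = (pi x pi y)^a]; for a balancing [h] take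
    [v = pi].  A reversible weight is stationary, and since [K_h] is irreducible
    every stationary distribution [p] is a multiple of it: [p / w] is harmonic
    for [K_h], hence constant by the maximum principle. *)
From HB Require Import structures.
From mathcomp Require Import all_boot all_order all_algebra.
From mathcomp Require Import all_classical all_reals all_analysis.
From mathcomp Require Import ring.
Set Implicit Arguments. Unset Strict Implicit. Unset Printing Implicit Defensive.
Import Order.TTheory GRing.Theory Num.Theory.
Local Open Scope ring_scope.

Section IrreducibleReversibleChain.
Variables (R : realType) (T : finType) (K : T -> T -> R).
Hypothesis K_stochastic : stochastic K.

Definition harmonic (f : T -> R) : Prop :=
  forall x, \sum_y K x y * f y = f x.

Lemma kpow_ge0 n x y : 0 <= kpow K n x y.
Proof.
have [K_ge0 _] := K_stochastic.
elim: n y => [|n IHn] y /=; first by case: eqP.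
by apply: sumr_ge0 => z _; rewrite mulr_ge0.
Qed.

Lemma kpowS_gt0P n x y :
  0 < kpow K n.+1 x y -> exists2 z, 0 < kpow K n x z & 0 < K z y.
Proof.
have [K_ge0 _] := K_stochastic.
move=> /= pos_sum; have [z _ pos_z] : exists2 z, true & 0 < kpow K n x z * K z y.
  apply/exists_inP; apply: contraTT pos_sum; rewrite negb_exists_in.
  move=> /forall_inP le0; rewrite -leNgt.
  by apply: sumr_le0 => z _; rewrite leNgt; apply: le0.
move: pos_z; rewrite lt0r mulf_eq0 negb_or => /andP[/andP[kpow_neq0 K_neq0] _].
by exists z; rewrite lt_def ?kpow_neq0 ?K_neq0 ?kpow_ge0 ?K_ge0.
Qed.

Section MaximumPrinciple.
Variables (f : T -> R) (x0 : T).
Hypotheses (f_harmonic : harmonic f) (f_max : forall y, f y <= f x0).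

Lemma harmonic_max_step z y : f z = f x0 -> 0 < K z y -> f y = f x0.
Proof.
have [K_ge0 K_sum1] := K_stochastic.
have subr_ge0_max u : 0 <= f x0 - f u by rewrite subr_ge0.
move=> fz Kzy; have gap_sum : \sum_u K z u * (f x0 - f u) = 0.
  under eq_bigr do rewrite mulrBr.
  by rewrite sumrB -mulr_suml K_sum1 f_harmonic fz mul1r subrr.
have /eqP : K z y * (f x0 - f y) = 0.
  by apply: (psumr_eq0P _ gap_sum) => // u _; rewrite mulr_ge0.
by rewrite mulf_eq0 gt_eqF //= subr_eq0 => /eqP.
Qed.

Lemma harmonic_max_reachable n y : 0 < kpow K n x0 y -> f y = f x0.
Proof.
elim: n y => [|n IHn] y /=; first by case: eqP => [<- //|_]; rewrite ltxx.
by move=> /kpowS_gt0P[z /IHn fz Kzy]; apply: harmonic_max_step fz Kzy.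
Qed.

End MaximumPrinciple.

Hypothesis K_irreducible : irreducible K.

Lemma irreducible_harmonic_const f : harmonic f -> forall x y, f x = f y.
Proof.
move=> f_harmonic x y.
have [x0 _ f_max] := @arg_maxP _ _ _ x xpredT f isT.
have f_eq_max z : f z = f x0.
  have [n reach] := K_irreducible x0 z.
  by apply: harmonic_max_reachable reach => // u; apply: f_max.
by rewrite !f_eq_max.
Qed.

Lemma reversible_stationary w : reversible K w -> stationary K w.
Proof.
have [_ K_sum1] := K_stochastic.
move=> w_rev y; under eq_bigr => x _ do rewrite w_rev.
by rewrite -mulr_sumr K_sum1 mulr1.
Qed.

Lemma reversibleZ c w : reversible K w -> reversible K (fun x => c * w x).
Proof. by move=> w_rev x y; rewrite -!mulrA w_rev. Qed.

Lemma stationary_div_harmonic (w p : T -> R) : (forall x, 0 < w x) ->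
  reversible K w -> stationary K p -> harmonic (fun x => p x / w x).
Proof.
move=> w_gt0 w_rev p_stat y; have w_neq0 x : w x != 0 by rewrite gt_eqF.
rewrite -[in RHS](p_stat y) mulr_suml; apply: eq_bigr => x _.
rewrite -{2}[p x](divfK (w_neq0 x)) -[_ * w x * _]mulrA w_rev.
by field; rewrite ?w_neq0.
Qed.

Lemma stationary_distribution_proportional (w p : T -> R) : (forall x, 0 < w x) ->
  reversible K w -> is_distribution p -> stationary K p ->
  exists2 c, 0 < c & forall x, p x = c * w x.
Proof.
move=> w_gt0 w_rev [p_ge0 p_sum1] p_stat.
have [x0 _|T_empty] := pickP (fun _ : T => true); last first.
  by move: p_sum1; rewrite big_pred0 // => /esym/eqP; rewrite oner_eq0.
have ratio_const := irreducible_harmonic_const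
  (stationary_div_harmonic w_gt0 w_rev p_stat).
pose c := p x0 / w x0.
have p_c x : p x = c * w x by rewrite /c -(ratio_const x) divfK ?gt_eqF.
exists c => //; rewrite lt_def divr_ge0 ?p_ge0 ?ltW // andbT.
apply: contra_eq_neq p_sum1 => c_eq0.
by under eq_bigr do rewrite p_c c_eq0 mul0r; rewrite big1 // eq_sym oner_neq0.
Qed.

Lemma stationary_prop_and_reversible_of_reversible (w : T -> R) :
  (forall x, 0 < w x) -> reversible K w -> stationary_prop_and_reversible K w.
Proof.
move=> w_gt0 w_rev; split=> [p|p p_dist p_stat]; last first.
  have [c _ p_c] := stationary_distribution_proportional w_gt0 w_rev p_dist p_stat.
  by have -> : p = _ := funext p_c; apply: reversibleZ.
split=> [[p_dist p_stat]|[p_dist [c _ p_c]]]; split=> //.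
  exact: stationary_distribution_proportional p_stat.
by have -> : p = _ := funext p_c; apply/reversible_stationary/reversibleZ.
Qed.

End IrreducibleReversibleChain.

Lemma powR_ratio_sym (R : realType) (a x y : R) : 0 < x -> 0 < y ->
  x `^ (2 * a) * (y / x) `^ a = y `^ (2 * a) * (x / y) `^ a.
Proof.
move=> x_gt0 y_gt0.
have sq_ratio u v : 0 < u -> 0 < v -> u `^ (2 * a) * (v / u) `^ a = (u * v) `^ a.
  move=> u_gt0 v_gt0; rewrite powRrM powR_mulrn ?ltW //.
  rewrite -powRM ?exprn_ge0 ?divr_ge0 ?ltW //.
  by congr (_ `^ a); field; rewrite gt_eqF.
by rewrite !sq_ratio // mulrC.
Qed.

Lemma balancing_ratio_sym (R : realType) (h : R -> R) (x y : R) :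
  balancing h -> 0 < x -> 0 < y -> x * h (y / x) = y * h (x / y).
Proof.
move=> h_bal x_gt0 y_gt0.
by rewrite h_bal ?divr_gt0 // invf_div mulrA [x * _]mulrC divfK ?gt_eqF.
Qed.

Section NeighbourhoodChain.
Variables (R : realType) (T : finType) (pi : T -> R) (N : T -> {set T}).
Variable h : R -> R.
Hypotheses (pi_gt0 : forall x, 0 < pi x)
  (N_sym : forall x y, (y \in N x) = (x \in N y))
  (N_neq0 : forall x, N x != finset.set0)
  (h_gt0 : forall u, 0 < u -> 0 < h u).

Let h_ratio_gt0 x y : 0 < h (pi y / pi x).
Proof. by rewrite h_gt0 ?divr_gt0. Qed.

Lemma Zh_gt0 x : 0 < Zh pi N h x.
Proof.
have [y y_in] := set0Pn _ (N_neq0 x).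
rewrite /Zh (bigD1 y) //= ltr_pwDl //.
by apply: sumr_ge0 => z _; rewrite ltW.
Qed.

Lemma Kh_gt0 x y : (0 < Kh pi N h x y) = (y \in N x).
Proof.
rewrite /Kh; case: ifP => _; last by rewrite !mul0r ltxx.
by rewrite mul1r divr_gt0 ?Zh_gt0.
Qed.

Lemma Kh_stochastic : stochastic (Kh pi N h).
Proof.
split=> [x y|x].
  rewrite /Kh; case: ifP => _; last by rewrite !mul0r.
  by rewrite mul1r divr_ge0 ?ltW ?Zh_gt0.
rewrite /Kh -mulr_suml.
under eq_bigr => y _ do rewrite (fun_if (fun c => c * _)) mul1r mul0r.
by rewrite -big_mkcond divff // gt_eqF ?Zh_gt0.
Qed.

Hypothesis N_irreducible : forall K : T -> T -> R, stochastic K ->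
  (forall x y, 0 < K x y <-> y \in N x) -> irreducible K.

Lemma Kh_irreducible : irreducible (Kh pi N h).
Proof. by apply: N_irreducible Kh_stochastic _ => x y; rewrite Kh_gt0. Qed.

Lemma Kh_reversible (v : T -> R) :
  (forall x y, y \in N x -> v x * h (pi y / pi x) = v y * h (pi x / pi y)) ->
  reversible (Kh pi N h) (fun x => v x * Zh pi N h x).
Proof.
move=> v_sym x y; rewrite /Kh -(N_sym x y).
case: ifP => y_in; last by rewrite !mul0r !mulr0.
rewrite !mul1r !mulrA [_ * Zh _ _ _ x * _]mulrAC [_ * Zh _ _ _ y * _]mulrAC.
by rewrite !mulfK ?gt_eqF ?Zh_gt0 // v_sym.
Qed.

Lemma Kh_stationary_prop_and_reversible (v : T -> R) : (forall x, 0 < v x) ->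
  (forall x y, y \in N x -> v x * h (pi y / pi x) = v y * h (pi x / pi y)) ->
  stationary_prop_and_reversible (Kh pi N h) (fun x => v x * Zh pi N h x).
Proof.
move=> v_gt0 v_sym.
have w_gt0 x : 0 < v x * Zh pi N h x by rewrite mulr_gt0 ?Zh_gt0.
exact: (stationary_prop_and_reversible_of_reversible
  Kh_stochastic Kh_irreducible w_gt0 (Kh_reversible v_sym)).
Qed.

End NeighbourhoodChain.

Theorem lemma1 (R : realType) (T : finType) (pi : T -> R) (N : T -> {set T})
  (hpi_pos : forall x, 0 < pi x)
  (hpi_sum : \sum_(x : T) pi x = 1)
  (hN_irr : forall x, x \notin N x)
  (hN_sym : forall x y, (y \in N x) = (x \in N y))
  (hN_ne : forall x, N x != finset.set0)
  (hN_irred : forall K : T -> T -> R, stochastic K ->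
      (forall x y, 0 < K x y <-> y \in N x) -> irreducible K)
  (h : R -> R) (hh_pos : forall u, 0 < u -> 0 < h u) :
  (forall a : R, 0 <= a -> (forall u, 0 < u -> h u = u `^ a) ->
     stationary_prop_and_reversible (Kh pi N h)
       (fun x => pi x `^ (2 * a) * Zh pi N h x))
  /\
  (balancing h ->
     stationary_prop_and_reversible (Kh pi N h) (fun x => pi x * Zh pi N h x)).
Proof.
have Kh_prop := Kh_stationary_prop_and_reversible hpi_pos hN_sym hN_ne hh_pos hN_irred.
split=> [a _ h_pow|h_bal].
- apply: Kh_prop => [x|x y _]; first by rewrite powR_gt0.
  by rewrite !h_pow ?divr_gt0 // powR_ratio_sym.
- by apply: Kh_prop => // x y _; apply: balancing_ratio_sym.
Qed.
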